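(* Let $\Phi(z,w)=\sum_{n,m=0}^\infty a_{nm}z^nw^m$ be an entire function on $\mathbb{C}^2$ (the series converging on all of $\mathbb{C}^2$), and define $\varphi(\zeta)=\Phi(\zeta,\bar\zeta)=\sum_{n,m\ge0}a_{nm}\zeta^n\bar\zeta^m$ for $\zeta\in\mathbb{C}$. Let $\Delta=\{|\zeta|\le1\}$, $\Gamma=\{|\zeta|=1\}$, $\gamma=\{(\zeta,\varphi(\zeta)):\zeta\in\Gamma\}\subset\mathbb{C}^2$ and $\Sigma=\{(\zeta,\varphi(\zeta)):\zeta\in\Delta\}\subset\mathbb{C}^2$. If $\Sigma\subset\widehat\gamma$, where $\widehat\gamma$ is the projective hull of $\gamma$, then $\varphi$ is a holomorphic function of $\zeta$ on $\operatorname{int}\Delta$ (in particular on $\operatorname{int}\Delta\setminus\{0\}$, with a removable singularity at $\zeta=0$).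
   Context: For a compact set $X\subset\mathbb{C}^n$, let $\mathcal{P}_d$ denote the space of complex polynomials on $\mathbb{C}^n$ of degree at most $d$. The projective hull $\widehat X$ of $X$ is the set of points $x\in\mathbb{C}^n$ for which there exists a constant $C_x$ such that $|P(x)|\le (C_x)^d\sup_X|P|$ for all $P\in\mathcal{P}_d$ and all $d\ge0$. *)

From Stdlib Require Import Reals.
From Coquelicot Require Import Coquelicot.
Open Scope R_scope.

Definition Cpw (z : C) (n : nat) : C := @pow_n C_Ring z n.

Definition poly2 (d : nat) (c : nat -> nat -> C) (p : C * C) : C :=
  @sum_n C_AbelianMonoid
    (fun i => @sum_n C_AbelianMonoid
       (fun j => Cmult (c i j) (Cmult (Cpw (fst p) i) (Cpw (snd p) j))) (d - i))
    d.

(* x lies in the projective hull of X: there is a constant Cx with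
   |P(x)| <= Cx^d * sup_X |P| for every P of degree <= d and every d.
   "sup_X |P|" is expressed through its upper bounds M. *)
Definition in_proj_hull (X : C * C -> Prop) (x : C * C) : Prop :=
  exists Cx : R, forall (d : nat) (c : nat -> nat -> C) (M : R),
    (forall y, X y -> Cmod (poly2 d c y) <= M) ->
    Cmod (poly2 d c x) <= Cx ^ d * M.

Definition dpsum (a : nat -> nat -> C) (z w : C) (N : nat) : C :=
  @sum_n C_AbelianMonoid
    (fun n => @sum_n C_AbelianMonoid
       (fun m => Cmult (a n m) (Cmult (Cpw z n) (Cpw w m))) N) N.

Definition dpsum_abs (a : nat -> nat -> C) (z w : C) (N : nat) : R :=
  @sum_n R_AbelianMonoid
    (fun n => @sum_n R_AbelianMonoid
       (fun m => Cmod (a n m) * (Cmod z ^ n * Cmod w ^ m)) N) N.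

Definition holomorphic_on (U : C -> Prop) (f : C -> C) : Prop :=
  forall z, U z -> @ex_derive C_AbsRing C_NormedModule f z.

From Stdlib Require Import Reals Lra Lia Psatz.
From Coquelicot Require Import Coquelicot.
Open Scope R_scope.

(* For [0 < |z| <= 1] consider the polynomial of degree [2N+1]
     Q_N(z, w) = z^N w - sum_{n,m <= N} a_{nm} z^(n+N-m).
   On [gamma] it equals [t^N (phi t - partial sum)], which is [O(R^-N)] for every
   [R] because the series is entire; the projective hull inequality
   [|Q_N(z, phi z)| <= C^(2N+1) sup_gamma |Q_N|] then forces
   [phi z = lim_N sum_{n,m <= N} a_{nm} z^n / z^m].  Hence the defect
   [sum a_{nm} z^n (conj z ^ m - z^-m)] vanishes on the punctured disc.  On the
   circle of radius [r] it is a trigonometric series in the angle; averaging over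
   [M]-th roots of unity isolates its diagonals and gives
   [sum_{n - m = p - q} a_{nm} ((r^2)^m - 1) = 0] for all small [r], which kills
   the coefficients [a_{pq}], [q >= 1], one column at a time.  So
   [phi = sum_n a_{n0} z^n] is an entire power series. *)

Notation sumC := (@sum_n C_AbelianMonoid).
Notation sumR := (@sum_n R_AbelianMonoid).

(* [ring] only finds the field structure of [C] when the equality is typed at [C]. *)
Ltac ring_C := match goal with |- @eq _ ?x ?y => change (@eq C x y); ring end.
Ltac ring_R := match goal with |- @eq _ ?x ?y => change (@eq R x y); ring end.

Definition dsumC (f : nat -> nat -> C) N : C := sumC (fun n => sumC (f n) N) N.
Definition dsumR (g : nat -> nat -> R) N : R := sumR (fun n => sumR (g n) N) N.

Section FiniteSums.

Lemma sumC_O f : @eq C (sumC f 0) (f 0%nat). Proof. exact (sum_O f). Qed.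
Lemma sumC_S f n : @eq C (sumC f (S n)) (sumC f n + f (S n))%C. Proof. exact (sum_Sn f n). Qed.
Lemma sumR_O f : sumR f 0 = f 0%nat. Proof. exact (sum_O f). Qed.
Lemma sumR_S f n : sumR f (S n) = sumR f n + f (S n). Proof. exact (sum_Sn f n). Qed.

Lemma sumC_ext f g N : (forall i, (i <= N)%nat -> f i = g i) -> @eq C (sumC f N) (sumC g N).
Proof. exact (sum_n_ext_loc f g N). Qed.
Lemma sumR_ext f g N : (forall i, (i <= N)%nat -> f i = g i) -> sumR f N = sumR g N.
Proof. exact (sum_n_ext_loc f g N). Qed.

Lemma sumC_plus f g N : @eq C (sumC (fun i => f i + g i)%C N) (sumC f N + sumC g N)%C.
Proof. exact (sum_n_plus f g N). Qed.
Lemma sumC_mult_l c f N : @eq C (sumC (fun i => c * f i)%C N) (c * sumC f N)%C.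
Proof. exact (@sum_n_mult_l C_Ring c f N). Qed.
Lemma sumC_minus f g N : @eq C (sumC (fun i => f i - g i)%C N) (sumC f N - sumC g N)%C.
Proof.
  rewrite (sumC_ext _ (fun i => f i + (-1) * g i)%C) by (intros; ring_C).
  rewrite sumC_plus, sumC_mult_l. ring_C.
Qed.
Lemma sumC_zero N : @eq C (sumC (fun _ : nat => (0:C)) N) (0:C).
Proof.
  induction N; rewrite ?sumC_O, ?sumC_S, ?IHN; [reflexivity | ring_C].
Qed.
Lemma sumR_plus f g N : sumR (fun i => f i + g i) N = sumR f N + sumR g N.
Proof. exact (sum_n_plus f g N). Qed.
Lemma sumR_mult_l c f N : sumR (fun i => c * f i) N = c * sumR f N.
Proof. exact (@sum_n_mult_l R_Ring c f N). Qed.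

Lemma sumR_le f g N : (forall i, (i <= N)%nat -> f i <= g i) -> sumR f N <= sumR g N.
Proof.
  induction N; intros H; rewrite ?sumR_O, ?sumR_S; auto.
  apply Rplus_le_compat; auto.
Qed.
Lemma sumR_nonneg f N : (forall i, (i <= N)%nat -> 0 <= f i) -> 0 <= sumR f N.
Proof.
  intros H. replace 0 with (sumR (fun _ => 0) N) at 1 by (rewrite sum_n_const; ring_R).
  now apply sumR_le.
Qed.
Lemma Cmod_sumC_le f N : Cmod (sumC f N) <= sumR (fun i => Cmod (f i)) N.
Proof.
  induction N; rewrite ?sumC_O, ?sumR_O, ?sumC_S, ?sumR_S; [lra|].
  eapply Rle_trans; [apply Cmod_triangle | lra].
Qed.
Lemma sumR_term_le f N i : (forall i, 0 <= f i) -> (i <= N)%nat -> f i <= sumR f N.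
Proof.
  intros Hf. induction 1.
  - destruct i; rewrite ?sumR_O, ?sumR_S; [lra|].
    pose proof (sumR_nonneg f i (fun j _ => Hf j)); lra.
  - rewrite sumR_S. specialize (Hf (S m)); lra.
Qed.

Lemma sumC_indicator (g : nat -> C) e N : (e <= N)%nat ->
  @eq C (sumC (fun i => if Nat.eqb i e then g i else (0:C)) N) (g e).
Proof.
  induction N; intros He.
  - rewrite sumC_O. replace e with 0%nat by lia. reflexivity.
  - rewrite sumC_S. destruct (Nat.eq_dec e (S N)) as [->|Hne].
    + rewrite Nat.eqb_refl, (sumC_ext _ (fun _ => (0:C))), sumC_zero; [ring_C|].
      intros i Hi. destruct (Nat.eqb_spec i (S N)); [lia|auto].
    + rewrite IHN by lia. destruct (Nat.eqb_spec (S N) e); [lia|ring_C].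
Qed.

Lemma sumC_switch (F : nat -> nat -> C) m n :
  @eq C (sumC (fun i => sumC (F i) n) m) (sumC (fun j => sumC (fun i => F i j) m) n).
Proof. exact (sum_n_switch F m n). Qed.

Lemma dsumC_ext f g N : (forall n m, (n <= N)%nat -> (m <= N)%nat -> f n m = g n m) ->
  @eq C (dsumC f N) (dsumC g N).
Proof. intros H. apply sumC_ext; intros. apply sumC_ext; auto. Qed.
Lemma dsumC_minus f g N :
  @eq C (dsumC (fun n m => f n m - g n m)%C N) (dsumC f N - dsumC g N)%C.
Proof. unfold dsumC. rewrite <- sumC_minus. apply sumC_ext; intros. apply sumC_minus. Qed.
Lemma dsumC_mult_l c f N : @eq C (dsumC (fun n m => c * f n m)%C N) (c * dsumC f N)%C.
Proof. unfold dsumC. rewrite <- sumC_mult_l. apply sumC_ext; intros. apply sumC_mult_l. Qed.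
Lemma dsumR_le f g N : (forall n m, (n <= N)%nat -> (m <= N)%nat -> f n m <= g n m) ->
  dsumR f N <= dsumR g N.
Proof. intros H. apply sumR_le; intros. apply sumR_le; auto. Qed.
Lemma dsumR_mult_l c f N : dsumR (fun n m => c * f n m) N = c * dsumR f N.
Proof. unfold dsumR. rewrite <- sumR_mult_l. apply sumR_ext; intros. apply sumR_mult_l. Qed.
Lemma dsumR_nonneg f N : (forall n m, 0 <= f n m) -> 0 <= dsumR f N.
Proof. intros H. apply sumR_nonneg; intros. apply sumR_nonneg; auto. Qed.
Lemma Cmod_dsumC_le f N : Cmod (dsumC f N) <= dsumR (fun n m => Cmod (f n m)) N.
Proof. eapply Rle_trans; [apply Cmod_sumC_le | apply sumR_le; intros; apply Cmod_sumC_le]. Qed.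

Lemma dsumC_indicator (x : C) p q N : (p <= N)%nat -> (q <= N)%nat ->
  @eq C (dsumC (fun n m => if andb (Nat.eqb n p) (Nat.eqb m q) then x else (0:C)) N) x.
Proof.
  intros Hp Hq. unfold dsumC.
  rewrite (sumC_ext _ (fun n => if Nat.eqb n p then x else (0:C))).
  - exact (sumC_indicator (fun _ => x) p N Hp).
  - intros i _. destruct (Nat.eqb i p); simpl.
    + exact (sumC_indicator (fun _ => x) q N Hq).
    + apply sumC_zero.
Qed.

Lemma dsumC_S f K : @eq C (dsumC f (S K))
  (dsumC f K + sumC (fun n => f n (S K)) K + sumC (f (S K)) (S K))%C.
Proof.
  unfold dsumC. rewrite sumC_S.
  rewrite (sumC_ext _ (fun n => sumC (f n) K + f n (S K))%C) by (intros; apply sumC_S).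
  rewrite sumC_plus. ring_C.
Qed.
Lemma dsumR_S f K : dsumR f (S K) =
  dsumR f K + sumR (fun n => f n (S K)) K + sumR (f (S K)) (S K).
Proof.
  unfold dsumR. rewrite sumR_S.
  rewrite (sumR_ext _ (fun n => sumR (f n) K + f n (S K))) by (intros; apply sumR_S).
  rewrite sumR_plus. ring_R.
Qed.

Lemma Cmod_dsumC_sub_le f g N N' : (N <= N')%nat -> (forall n m, 0 <= g n m) ->
  (forall n m, (N < n \/ N < m)%nat -> Cmod (f n m) <= g n m) ->
  Cmod (dsumC f N' - dsumC f N) <= dsumR g N'.
Proof.
  intros HN Hg Hf. induction HN as [|K HN IH].
  - replace (dsumC f N - dsumC f N)%C with (0:C) by ring_C.
    rewrite Cmod_0. now apply dsumR_nonneg.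
  - rewrite dsumC_S, dsumR_S.
    set (shellC := (sumC (fun n => f n (S K)) K + sumC (f (S K)) (S K))%C).
    assert (Hshell : Cmod shellC <= sumR (fun n => g n (S K)) K + sumR (g (S K)) (S K)).
    { eapply Rle_trans; [apply Cmod_triangle|].
      apply Rplus_le_compat; (eapply Rle_trans; [apply Cmod_sumC_le|]);
        apply sumR_le; intros; apply Hf; lia. }
    replace (dsumC f K + sumC (fun n => f n (S K)) K + sumC (f (S K)) (S K) - dsumC f N)%C
      with ((dsumC f K - dsumC f N) + shellC)%C by (unfold shellC; ring_C).
    eapply Rle_trans; [apply Cmod_triangle | lra].
Qed.

End FiniteSums.

Section ComplexPowers.

Lemma Cpw_O (z : C) : Cpw z 0 = 1%C. Proof. reflexivity. Qed.
Lemma Cpw_S (z : C) n : Cpw z (S n) = (z * Cpw z n)%C. Proof. reflexivity. Qed.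
Lemma Cpw_add (z : C) n m : Cpw z (n + m) = (Cpw z n * Cpw z m)%C.
Proof. induction n; cbn [Nat.add]; rewrite ?Cpw_O, ?Cpw_S, ?IHn; ring. Qed.
Lemma Cpw_mult (z w : C) n : Cpw (z * w) n = (Cpw z n * Cpw w n)%C.
Proof. induction n; rewrite ?Cpw_O, ?Cpw_S, ?IHn; ring. Qed.
Lemma Cpw_1 k : Cpw 1 k = 1%C.
Proof. induction k; rewrite ?Cpw_O, ?Cpw_S, ?IHk; ring. Qed.
Lemma Cpw_Cpw (z : C) i j : Cpw (Cpw z i) j = Cpw z (i * j).
Proof.
  induction j; [now rewrite Nat.mul_0_r|].
  rewrite Cpw_S, IHj, Nat.mul_succ_r, Nat.add_comm, Cpw_add. reflexivity.
Qed.
Lemma Cmod_Cpw (z : C) n : Cmod (Cpw z n) = Cmod z ^ n.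
Proof. induction n; rewrite ?Cpw_O, ?Cpw_S, ?Cmod_1, ?Cmod_mult, ?IHn; reflexivity. Qed.
Lemma Cpw_RtoC (r : R) n : Cpw (RtoC r) n = RtoC (r ^ n).
Proof. induction n; [reflexivity|]. now rewrite Cpw_S, IHn, <- RtoC_mult. Qed.
Lemma Cpw_conj (z : C) n : Cpw (Cconj z) n = Cconj (Cpw z n).
Proof.
  induction n.
  - apply injective_projections; simpl; ring.
  - now rewrite !Cpw_S, IHn, Cmult_conj.
Qed.
Lemma Cpw_neq_0 (z : C) n : z <> 0%C -> Cpw z n <> 0%C.
Proof.
  intros Hz H. apply (f_equal Cmod) in H. rewrite Cmod_Cpw, Cmod_0 in H.
  apply (pow_nonzero (Cmod z) n); auto. intro E. apply Hz, Cmod_eq_0, E.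
Qed.

Lemma Cmult_conj_unit (t : C) : Cmod t = 1 -> (t * Cconj t)%C = 1%C.
Proof. intros H. rewrite <- Cmod2_conj, H. apply injective_projections; simpl; ring. Qed.

End ComplexPowers.

Lemma filterlim_C_eventually (u : nat -> C) l : filterlim u eventually (locally l) ->
  forall eps, 0 < eps -> exists N0, forall n, (N0 <= n)%nat -> Cmod (u n - l) < eps.
Proof.
  intros H eps He.
  destruct (proj1 (@filterlim_locally_ball_norm C_AbsRing nat C_NormedModule eventually _ u l)
              H (mkposreal _ He)) as [N0 HN].
  exists N0. exact HN.
Qed.

Lemma pow2_inv_eventually_le (A eps : R) : 0 <= A -> 0 < eps ->
  exists N0, forall N, (N0 <= N)%nat -> A * (/ 2) ^ N <= eps.
Proof.
  intros HA He.
  destruct (pow_lt_1_zero (/ 2) ltac:(rewrite Rabs_pos_eq; lra) (eps / (A + 1))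
              ltac:(apply Rdiv_lt_0_compat; lra)) as [N0 HN0].
  exists N0. intros N HN. specialize (HN0 N HN).
  rewrite Rabs_pos_eq in HN0 by (apply pow_le; lra).
  apply Rle_trans with (A * (eps / (A + 1))); [apply Rmult_le_compat_l; lra|].
  apply Rmult_le_reg_r with (A + 1); [lra|].
  replace (A * (eps / (A + 1)) * (A + 1)) with (A * eps) by (field; lra). nra.
Qed.

Section TailEstimates.

Variable a : nat -> nat -> C.

Lemma dpsum_abs_nonneg z w N : 0 <= dpsum_abs a z w N.
Proof.
  apply dsumR_nonneg. intros. apply Rmult_le_pos; [apply Cmod_ge_0|].
  apply Rmult_le_pos; apply pow_le; apply Cmod_ge_0.
Qed.

Lemma dpsum_abs_RtoC (x : R) N : 0 <= x ->
  dpsum_abs a (RtoC x) (RtoC x) N = dsumR (fun n m => Cmod (a n m) * (x ^ n * x ^ m)) N.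
Proof. intros Hx. unfold dpsum_abs. rewrite Cmod_R, Rabs_pos_eq by auto. reflexivity. Qed.

Lemma pow_mul_pow_le_scaled x y rho R0 n m K :
  0 <= x <= rho -> 0 <= y <= rho -> 1 <= R0 -> (K <= n + m)%nat ->
  x ^ n * y ^ m <= (R0 * rho) ^ n * (R0 * rho) ^ m / R0 ^ K.
Proof.
  intros Hx Hy HR HK.
  assert (HRK : 0 < R0 ^ K) by (apply pow_lt; lra).
  assert (HRnm : R0 ^ K <= R0 ^ n * R0 ^ m) by (rewrite <- pow_add; apply Rle_pow; auto).
  assert (x ^ n <= rho ^ n) by (apply pow_incr; lra).
  assert (y ^ m <= rho ^ m) by (apply pow_incr; lra).
  assert (0 <= x ^ n) by (apply pow_le; lra). assert (0 <= y ^ m) by (apply pow_le; lra).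
  assert (0 <= rho ^ n) by (apply pow_le; lra). assert (0 <= rho ^ m) by (apply pow_le; lra).
  apply Rmult_le_reg_r with (R0 ^ K); auto.
  replace ((R0 * rho) ^ n * (R0 * rho) ^ m / R0 ^ K * R0 ^ K)
    with (rho ^ n * rho ^ m * (R0 ^ n * R0 ^ m)) by (rewrite !Rpow_mult_distr; field; lra).
  apply Rle_trans with (rho ^ n * rho ^ m * R0 ^ K).
  - apply Rmult_le_compat_r; [lra|]. apply Rmult_le_compat; auto.
  - apply Rmult_le_compat_l; nra.
Qed.

(* Convergence of the series at the larger radius [R0 * rho] makes its tail
   beyond the square [N] geometrically small on the polydisc of radius [rho]. *)
Lemma Cmod_dpsum_sub_le z w rho R0 B N N' : 0 <= rho -> 1 <= R0 ->
  Cmod z <= rho -> Cmod w <= rho ->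
  (forall K, dpsum_abs a (RtoC (R0 * rho)) (RtoC (R0 * rho)) K <= B) ->
  (N <= N')%nat -> Cmod (dpsum a z w N' - dpsum a z w N) <= B / R0 ^ (S N).
Proof.
  intros Hr HR Hz Hw HB HN.
  assert (HRp : 0 < R0 ^ S N) by (apply pow_lt; lra).
  set (g n m := / R0 ^ S N * (Cmod (a n m) * ((R0 * rho) ^ n * (R0 * rho) ^ m))).
  apply Rle_trans with (dsumR g N').
  - apply Cmod_dsumC_sub_le; auto.
    + intros n m. unfold g. apply Rmult_le_pos; [left; now apply Rinv_0_lt_compat|].
      apply Rmult_le_pos; [apply Cmod_ge_0|]. apply Rmult_le_pos; apply pow_le; nra.
    + intros n m Hnm. unfold g. rewrite !Cmod_mult, !Cmod_Cpw.
      replace (/ R0 ^ S N * (Cmod (a n m) * ((R0 * rho) ^ n * (R0 * rho) ^ m)))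
        with (Cmod (a n m) * ((R0 * rho) ^ n * (R0 * rho) ^ m / R0 ^ S N)) by (unfold Rdiv; ring).
      apply Rmult_le_compat_l; [apply Cmod_ge_0|].
      apply pow_mul_pow_le_scaled; auto; try lia; split; auto; apply Cmod_ge_0.
  - unfold g. rewrite dsumR_mult_l, <- dpsum_abs_RtoC by nra.
    unfold Rdiv. rewrite Rmult_comm.
    apply Rmult_le_compat_r; [left; now apply Rinv_0_lt_compat | apply HB].
Qed.

Lemma Cmod_lim_sub_dpsum_le z w l rho R0 B N : 0 <= rho -> 1 <= R0 ->
  Cmod z <= rho -> Cmod w <= rho ->
  (forall K, dpsum_abs a (RtoC (R0 * rho)) (RtoC (R0 * rho)) K <= B) ->
  filterlim (dpsum a z w) eventually (locally l) ->
  Cmod (l - dpsum a z w N) <= B / R0 ^ (S N).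
Proof.
  intros Hr HR Hz Hw HB Hl. apply le_epsilon. intros eps He.
  destruct (filterlim_C_eventually _ _ Hl eps He) as [N0 HN0].
  specialize (HN0 (max N0 N) (Nat.le_max_l _ _)).
  pose proof (Cmod_dpsum_sub_le z w rho R0 B N (max N0 N) Hr HR Hz Hw HB (Nat.le_max_r _ _)).
  replace (l - dpsum a z w N)%C
    with ((dpsum a z w (max N0 N) - dpsum a z w N) - (dpsum a z w (max N0 N) - l))%C by ring_C.
  eapply Rle_trans; [apply Cmod_triangle|]. rewrite Cmod_opp. lra.
Qed.

End TailEstimates.

Section TestPolynomial.

Variable a : nat -> nat -> C.

Lemma poly2_affine_in_w d c (z w : C) :
  (forall i j, (2 <= j)%nat -> c i j = (0:C)) -> c d 1%nat = (0:C) ->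
  poly2 d c (z, w) = sumC (fun i => (c i 0%nat + c i 1%nat * w) * Cpw z i)%C d.
Proof.
  intros Hc2 Hd. apply sumC_ext. intros i Hi. simpl fst; simpl snd.
  assert (Hrow : forall k, sumC (fun j => c i j * (Cpw z i * Cpw w j))%C (S k)
                           = ((c i 0%nat + c i 1%nat * w) * Cpw z i)%C).
  { induction k.
    - rewrite sumC_S, sumC_O, Cpw_S, !Cpw_O. ring_C.
    - rewrite sumC_S, IHk, (Hc2 i (S (S k))) by lia. ring_C. }
  destruct (Nat.eq_dec i d) as [->|Hne].
  - rewrite Nat.sub_diag, sumC_O, Hd, Cpw_O. ring_C.
  - replace (d - i)%nat with (S (d - i - 1)) by lia. apply Hrow.
Qed.

(* Coefficient of [z^i] in [sum_{n,m <= N} a_{nm} z^(n+N-m)]. *)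
Definition test_coef N i : C :=
  dsumC (fun n m => if Nat.eqb i (n + N - m) then a n m else (0:C)) N.

(* Coefficients of the polynomial [z^N w - sum_{n,m <= N} a_{nm} z^(n+N-m)],
   of degree at most [2N+1]. *)
Definition test_poly N i j : C :=
  if Nat.eqb j 0 then (- test_coef N i)%C
  else if andb (Nat.eqb j 1) (Nat.eqb i N) then (1:C) else (0:C).

Lemma sumC_test_coef N (z : C) :
  sumC (fun i => test_coef N i * Cpw z i)%C (2 * N + 1)
  = dsumC (fun n m => a n m * Cpw z (n + N - m))%C N.
Proof.
  unfold test_coef, dsumC.
  rewrite (sumC_ext _ (fun i => sumC (fun n => sumC (fun m =>
      if Nat.eqb i (n + N - m) then a n m * Cpw z i else (0:C))%C N) N)).
  2:{ intros i _. rewrite Cmult_comm, <- sumC_mult_l. apply sumC_ext; intros n _.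
      rewrite <- sumC_mult_l. apply sumC_ext; intros m _.
      destruct (Nat.eqb i (n + N - m)); ring_C. }
  rewrite sumC_switch. apply sumC_ext; intros n Hn. rewrite sumC_switch. apply sumC_ext; intros m Hm.
  rewrite (sumC_ext _ (fun i => if Nat.eqb i (n + N - m) then a n m * Cpw z (n + N - m) else (0:C))%C).
  - apply (sumC_indicator (fun _ => a n m * Cpw z (n + N - m))%C). lia.
  - intros i _. destruct (Nat.eqb_spec i (n + N - m)); subst; auto.
Qed.

Lemma poly2_test_poly N (z w : C) : poly2 (2 * N + 1) (test_poly N) (z, w) =
  (Cpw z N * w - dsumC (fun n m => a n m * Cpw z (n + N - m)) N)%C.
Proof.
  rewrite poly2_affine_in_w.
  2:{ intros i j Hj. unfold test_poly.
      destruct (Nat.eqb_spec j 0), (Nat.eqb_spec j 1); simpl; auto; lia. }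
  2:{ unfold test_poly. rewrite (proj2 (Nat.eqb_neq (2 * N + 1) N)) by lia. reflexivity. }
  rewrite (sumC_ext _ (fun i => (-1) * (test_coef N i * Cpw z i)
                        + (if Nat.eqb i N then Cpw z N * w else (0:C)))%C).
  - rewrite sumC_plus, sumC_mult_l, sumC_test_coef, (sumC_indicator (fun _ => Cpw z N * w)%C) by lia.
    ring_C.
  - intros i _. unfold test_poly. simpl.
    destruct (Nat.eqb_spec i N) as [->|]; simpl; ring_C.
Qed.

End TestPolynomial.

Lemma Cpw_shift_unit (t : C) n m N : Cmod t = 1 -> (m <= N)%nat ->
  Cpw t (n + N - m) = (Cpw t N * (Cpw t n * Cpw (Cconj t) m))%C.
Proof.
  intros Ht Hm.
  transitivity (Cpw t (n + N - m) * Cpw (t * Cconj t) m)%C.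
  - rewrite Cmult_conj_unit, Cpw_1 by auto. ring_C.
  - rewrite Cpw_mult, Cmult_assoc, <- Cpw_add.
    replace (n + N - m + m)%nat with (N + n)%nat by lia. rewrite Cpw_add. ring_C.
Qed.

Lemma Cpw_shift_neq_0 (z : C) n m N : z <> 0%C -> (m <= N)%nat ->
  Cpw z (n + N - m) = (Cpw z N * (Cpw z n / Cpw z m))%C.
Proof.
  intros Hz Hm. pose proof (Cpw_neq_0 z m Hz).
  assert (E : (Cpw z (n + N - m) * Cpw z m)%C = (Cpw z N * Cpw z n)%C).
  { rewrite <- !Cpw_add. f_equal. lia. }
  replace (Cpw z (n + N - m)) with ((Cpw z (n + N - m) * Cpw z m) / Cpw z m)%C
    by (field; auto).
  rewrite E. field. auto.
Qed.

Lemma le_geometric_of_scaled_bound r K R0 B x N :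
  0 < r -> 0 <= K -> 0 <= B -> 1 <= R0 -> K * K <= R0 * r / 2 ->
  r ^ N * x <= K ^ (2 * N + 1) * (B / R0 ^ S N) ->
  x <= K * B / R0 * (/ 2) ^ N.
Proof.
  intros Hr HK HB HR HKK Hx.
  assert (HrN : 0 < r ^ N) by (apply pow_lt; lra).
  assert (HRN : 0 < R0 ^ N) by (apply pow_lt; lra).
  apply Rmult_le_reg_l with (r ^ N); auto. eapply Rle_trans; [apply Hx|].
  replace (K ^ (2 * N + 1) * (B / R0 ^ S N)) with (K * B / R0 * ((K * K) ^ N / R0 ^ N)).
  2:{ rewrite pow_add, pow_mult, pow_1. replace (K ^ 2) with (K * K) by ring.
      change (R0 ^ S N) with (R0 * R0 ^ N). field; split; lra. }
  replace (r ^ N * (K * B / R0 * (/ 2) ^ N)) with (K * B / R0 * ((R0 * r / 2) ^ N / R0 ^ N)).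
  2:{ unfold Rdiv. rewrite !Rpow_mult_distr, pow_inv.
      field; repeat split; try lra; apply pow_nonzero; lra. }
  apply Rmult_le_compat_l; [apply Rdiv_le_0_compat; nra|].
  unfold Rdiv. apply Rmult_le_compat_r; [left; now apply Rinv_0_lt_compat|].
  apply pow_incr. nra.
Qed.

(* The "Laurent" partial sums [sum_{n,m <= N} a_{nm} z^n / z^m]: on the unit
   circle they coincide with the partial sums of [phi]. *)
Definition lsum (a : nat -> nat -> C) (z : C) N : C :=
  dsumC (fun n m => a n m * (Cpw z n / Cpw z m))%C N.

Definition defect (a : nat -> nat -> C) (z : C) N : C :=
  dsumC (fun n m => a n m * (Cpw z n * Cpw (Cconj z) m - Cpw z n / Cpw z m))%C N.

Lemma defect_eq a z N : defect a z N = (dpsum a z (Cconj z) N - lsum a z N)%C.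
Proof.
  change (dpsum a z (Cconj z) N) with (dsumC (fun n m => a n m * (Cpw z n * Cpw (Cconj z) m))%C N).
  unfold defect, lsum. rewrite <- dsumC_minus. apply dsumC_ext; intros. ring_C.
Qed.

Section HullEstimate.

Variables (a : nat -> nat -> C) (phi : C -> C).
Hypothesis Hentire : forall z w : C, exists B : R, forall N : nat, dpsum_abs a z w N <= B.
Hypothesis Hphi : forall zeta : C,
  filterlim (dpsum a zeta (Cconj zeta)) eventually (locally (phi zeta)).
Hypothesis Hhull : forall zeta : C, Cmod zeta <= 1 ->
  in_proj_hull (fun p : C * C => exists t : C, Cmod t = 1 /\ p = (t, phi t)) (zeta, phi zeta).

(* The test polynomial is [t^N (phi t - partial sum)] on the circle and
   [z^N (phi z - lsum z)] at [(z, phi z)]. *)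
Lemma hull_lsum_bound (z : C) Cx R0 B N : 1 <= R0 ->
  (forall K, dpsum_abs a (RtoC (R0 * 1)) (RtoC (R0 * 1)) K <= B) ->
  (forall (d : nat) (c : nat -> nat -> C) (M : R),
      (forall y, (exists t : C, Cmod t = 1 /\ y = (t, phi t)) -> Cmod (poly2 d c y) <= M) ->
      Cmod (poly2 d c (z, phi z)) <= Cx ^ d * M) ->
  z <> 0%C ->
  Cmod z ^ N * Cmod (phi z - lsum a z N) <= Cx ^ (2 * N + 1) * (B / R0 ^ S N).
Proof.
  intros HR HB HC Hz.
  assert (Eat : (Cpw z N * (phi z - lsum a z N))%C = poly2 (2 * N + 1) (test_poly a N) (z, phi z)).
  { rewrite poly2_test_poly, (dsumC_ext _ (fun n m => Cpw z N * (a n m * (Cpw z n / Cpw z m)))%C).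
    - rewrite dsumC_mult_l. unfold lsum. ring_C.
    - intros n m _ Hm. rewrite Cpw_shift_neq_0 by auto. ring_C. }
  rewrite <- Cmod_Cpw, <- Cmod_mult, Eat. apply HC.
  intros y [t [Ht ->]]. rewrite poly2_test_poly.
  rewrite (dsumC_ext _ (fun n m => Cpw t N * (a n m * (Cpw t n * Cpw (Cconj t) m)))%C).
  2:{ intros n m _ Hm. rewrite Cpw_shift_unit by auto. ring_C. }
  rewrite dsumC_mult_l.
  change (dsumC (fun n m => a n m * (Cpw t n * Cpw (Cconj t) m))%C N) with (dpsum a t (Cconj t) N).
  replace (Cpw t N * phi t - Cpw t N * dpsum a t (Cconj t) N)%C
    with (Cpw t N * (phi t - dpsum a t (Cconj t) N))%C by ring_C.
  rewrite Cmod_mult, Cmod_Cpw, Ht, pow1, Rmult_1_l.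
  apply (Cmod_lim_sub_dpsum_le a t (Cconj t) (phi t) 1 R0 B N); auto; try lra.
  rewrite Cmod_conj; lra.
Qed.

Lemma lsum_gap_geometric (z : C) : 0 < Cmod z <= 1 ->
  exists A, 0 <= A /\ forall N, Cmod (phi z - lsum a z N) <= A * (/ 2) ^ N.
Proof.
  intros [Hr1 Hr2]. destruct (Hhull z Hr2) as [Cx HC].
  set (r := Cmod z) in *. set (K := Rabs Cx).
  assert (HK : 0 <= K) by apply Rabs_pos.
  set (R0 := 2 * (K * K + 1) / r + 1).
  assert (HR0 : 1 <= R0).
  { unfold R0. assert (0 < 2 * (K * K + 1) / r) by (apply Rdiv_lt_0_compat; nra). lra. }
  assert (HKK : K * K <= R0 * r / 2).
  { unfold R0. replace ((2 * (K * K + 1) / r + 1) * r / 2) with (K * K + 1 + r / 2) by (field; lra).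
    lra. }
  destruct (Hentire (RtoC (R0 * 1)) (RtoC (R0 * 1))) as [B HB].
  assert (HB0 : 0 <= B) by (eapply Rle_trans; [apply dpsum_abs_nonneg | apply (HB 0%nat)]).
  assert (Hz : z <> 0%C) by (intro E; unfold r in Hr1; rewrite E, Cmod_0 in Hr1; lra).
  exists (K * B / R0). split; [apply Rdiv_le_0_compat; nra|]. intros N.
  apply (le_geometric_of_scaled_bound r K R0 B); auto.
  eapply Rle_trans; [apply (hull_lsum_bound z Cx R0 B N HR0 HB HC Hz)|].
  apply Rmult_le_compat_r; [apply Rdiv_le_0_compat; [lra | apply pow_lt; lra]|].
  unfold K. rewrite RPow_abs. apply Rle_abs.
Qed.

Lemma defect_eventually_small (z : C) : 0 < Cmod z <= 1 ->
  forall eps, 0 < eps -> exists N0, forall N, (N0 <= N)%nat -> Cmod (defect a z N) <= eps.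
Proof.
  intros Hz eps He.
  destruct (lsum_gap_geometric z Hz) as [A [HA Hgap]].
  destruct (pow2_inv_eventually_le A (eps / 2) HA ltac:(lra)) as [N1 H1].
  destruct (filterlim_C_eventually _ _ (Hphi z) (eps / 2) ltac:(lra)) as [N2 H2].
  exists (max N1 N2). intros N HN. rewrite defect_eq.
  specialize (H1 N ltac:(lia)). specialize (H2 N ltac:(lia)). specialize (Hgap N).
  replace (dpsum a z (Cconj z) N - lsum a z N)%C
    with ((dpsum a z (Cconj z) N - phi z) + (phi z - lsum a z N))%C by ring_C.
  eapply Rle_trans; [apply Cmod_triangle | lra].
Qed.

End HullEstimate.

Section RootsOfUnity.

Definition cis (x : R) : C := (cos x, sin x).

Lemma cis_mult x y : (cis x * cis y)%C = cis (x + y).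
Proof. unfold cis. apply injective_projections; simpl; rewrite ?cos_plus, ?sin_plus; ring. Qed.
Lemma Cmod_cis x : Cmod (cis x) = 1.
Proof.
  unfold cis, Cmod; simpl fst; simpl snd.
  replace (cos x ^ 2 + sin x ^ 2) with (Rsqr (sin x) + Rsqr (cos x)) by (unfold Rsqr; ring).
  rewrite sin2_cos2. apply sqrt_1.
Qed.
Lemma Cpw_cis x k : Cpw (cis x) k = cis (x * INR k).
Proof.
  induction k.
  - unfold cis. rewrite Rmult_0_r, cos_0, sin_0. reflexivity.
  - rewrite Cpw_S, IHk, cis_mult, S_INR. f_equal. ring.
Qed.

Lemma cos_lt_1 x : 0 < x < 2 * PI -> cos x < 1.
Proof.
  intros Hx. replace x with (2 * (x / 2)) by field. rewrite cos_2a_sin.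
  assert (0 < sin (x / 2)) by (apply sin_gt_0; lra). nra.
Qed.

Definition root1 (M : nat) : C := cis (2 * PI / INR M).

Lemma Cmod_root1 M : Cmod (root1 M) = 1.
Proof. apply Cmod_cis. Qed.

Lemma root1_mult_conj M : (root1 M * Cconj (root1 M))%C = 1%C.
Proof. apply Cmult_conj_unit, Cmod_root1. Qed.

Lemma Cpw_root1_M M : (0 < M)%nat -> Cpw (root1 M) M = 1%C.
Proof.
  intros HM. unfold root1. rewrite Cpw_cis.
  replace (2 * PI / INR M * INR M) with (2 * PI) by (field; apply not_0_INR; lia).
  unfold cis. rewrite cos_2PI, sin_2PI. reflexivity.
Qed.

Lemma Cpw_root1_neq_1 M k : (0 < k < M)%nat -> Cpw (root1 M) k <> 1%C.
Proof.
  intros Hk E. unfold root1 in E. rewrite Cpw_cis in E. apply (f_equal fst) in E. simpl in E.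
  assert (0 < INR k) by (apply lt_0_INR; lia). assert (INR k < INR M) by (apply lt_INR; lia).
  pose proof PI_RGT_0.
  assert (0 < 2 * PI / INR M * INR k < 2 * PI).
  { replace (2 * PI / INR M * INR k) with (2 * PI * (INR k / INR M)) by (field; lra).
    split; [apply Rmult_lt_0_compat; [lra | apply Rdiv_lt_0_compat; lra]|].
    rewrite <- (Rmult_1_r (2 * PI)) at 2. apply Rmult_lt_compat_l; [lra|].
    apply Rmult_lt_reg_r with (INR M); [lra|]. unfold Rdiv. rewrite Rmult_assoc, Rinv_l; lra. }
  pose proof (cos_lt_1 _ H2). lra.
Qed.

Lemma Cconj_neq_1 (z : C) : z <> 1%C -> Cconj z <> 1%C.
Proof.
  intros H E. apply H. rewrite <- (Cconj_conj z), E.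
  apply injective_projections; simpl; ring.
Qed.

Lemma geometric_sumC (u : C) n : ((u - 1) * sumC (Cpw u) n)%C = (Cpw u (S n) - 1)%C.
Proof.
  induction n.
  - rewrite sumC_O, !Cpw_S, Cpw_O. ring_C.
  - rewrite sumC_S, Cmult_plus_distr_l, IHn, (Cpw_S u (S n)). ring_C.
Qed.

Lemma sumC_Cpw_root_eq_0 (u : C) M : (0 < M)%nat -> Cpw u M = 1%C -> u <> 1%C ->
  @eq C (sumC (Cpw u) (M - 1)) 0%C.
Proof.
  intros HM H1 H2. pose proof (geometric_sumC u (M - 1)) as E.
  replace (S (M - 1)) with M in E by lia. rewrite H1, (proj1 (Ceq_minus 1 1) eq_refl) in E.
  destruct (Ceq_dec (sumC (Cpw u) (M - 1)) 0) as [|Hne]; auto.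
  exfalso. exact (Cmult_neq_0 _ _ (Cminus_eq_contra _ _ H2) Hne E).
Qed.

(* Discrete orthogonality of the characters [l |-> w^(e1 l) conj w ^(e2 l)],
   [w = root1 M]: the average is [1] if [e1 = e2] and [0] if [0 < |e1 - e2| < M]. *)
Definition root_avg M e1 e2 : C :=
  (/ INR M * sumC (Cpw (Cpw (root1 M) e1 * Cpw (Cconj (root1 M)) e2)) (M - 1))%C.

Lemma root_avg_diag M e : (0 < M)%nat -> root_avg M e e = 1%C.
Proof.
  intros HM. unfold root_avg. rewrite <- Cpw_mult, root1_mult_conj, Cpw_1.
  rewrite (sumC_ext _ (fun _ => RtoC 1)) by (intros; apply Cpw_1).
  assert (E : forall n, sumC (fun _ => RtoC 1) n = RtoC (INR (S n))).
  { induction n; [now rewrite sumC_O|]. rewrite sumC_S, IHn, (S_INR (S n)), RtoC_plus. reflexivity. }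
  rewrite E. replace (S (M - 1)) with M by lia.
  apply injective_projections; simpl; field; apply not_0_INR; lia.
Qed.

Lemma root_ratio M e1 e2 : e1 <> e2 -> (e1 < e2 + M)%nat -> (e2 < e1 + M)%nat ->
  exists k, (0 < k < M)%nat /\
    ((Cpw (root1 M) e1 * Cpw (Cconj (root1 M)) e2)%C = Cpw (root1 M) k \/
     (Cpw (root1 M) e1 * Cpw (Cconj (root1 M)) e2)%C = Cpw (Cconj (root1 M)) k).
Proof.
  intros H1 H2 H3. destruct (Nat.lt_ge_cases e2 e1).
  - exists (e1 - e2)%nat. split; [lia|]. left.
    replace e1 with ((e1 - e2) + e2)%nat at 1 by lia.
    rewrite Cpw_add, <- Cmult_assoc, <- Cpw_mult, root1_mult_conj, Cpw_1. ring_C.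
  - exists (e2 - e1)%nat. split; [lia|]. right.
    replace e2 with ((e2 - e1) + e1)%nat at 1 by lia.
    rewrite Cpw_add, Cmult_comm, <- Cmult_assoc, (Cmult_comm _ (Cpw (root1 M) e1)),
      <- Cpw_mult, root1_mult_conj, Cpw_1. ring_C.
Qed.

Lemma root_avg_off M e1 e2 : (0 < M)%nat -> e1 <> e2 -> (e1 < e2 + M)%nat -> (e2 < e1 + M)%nat ->
  root_avg M e1 e2 = 0%C.
Proof.
  intros HM H1 H2 H3. unfold root_avg.
  destruct (root_ratio M e1 e2 H1 H2 H3) as [k [Hk [E|E]]]; rewrite E, sumC_Cpw_root_eq_0;
    try ring_C; auto.
  - rewrite Cpw_Cpw, Nat.mul_comm, <- Cpw_Cpw, Cpw_root1_M by auto. apply Cpw_1.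
  - now apply Cpw_root1_neq_1.
  - rewrite Cpw_Cpw, Nat.mul_comm, <- Cpw_Cpw, Cpw_conj, Cpw_root1_M by auto.
    replace (Cconj 1) with (RtoC 1) by (apply injective_projections; simpl; ring).
    apply Cpw_1.
  - rewrite Cpw_conj. now apply Cconj_neq_1, Cpw_root1_neq_1.
Qed.

Lemma Cmod_avg_le M (f : nat -> C) eps : (0 < M)%nat ->
  (forall l, (l <= M - 1)%nat -> Cmod (f l) <= eps) ->
  Cmod (/ INR M * sumC f (M - 1))%C <= eps.
Proof.
  intros HM Hf. assert (HMp : 0 < INR M) by (apply lt_0_INR; auto).
  rewrite Cmod_mult, Cmod_inv, Cmod_R, Rabs_pos_eq by (try (intro E; apply RtoC_inj in E); lra).
  apply Rle_trans with (/ INR M * sumR (fun _ => eps) (M - 1)).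
  - apply Rmult_le_compat_l; [left; now apply Rinv_0_lt_compat|].
    eapply Rle_trans; [apply Cmod_sumC_le | now apply sumR_le].
  - rewrite sum_n_const. replace (S (M - 1)) with M by lia. right. field. lra.
Qed.

Lemma Cmod_root_avg_le M e1 e2 : (0 < M)%nat -> Cmod (root_avg M e1 e2) <= 1.
Proof.
  intros HM. apply Cmod_avg_le; auto. intros l _.
  rewrite Cmod_Cpw, Cmod_mult, !Cmod_Cpw, Cmod_conj, Cmod_root1, !pow1, Rmult_1_l, pow1. lra.
Qed.

Lemma root_avg_sub_diag_ind M e1 e2 : (0 < M)%nat ->
  let err := (root_avg M e1 e2 - (if Nat.eqb e1 e2 then (1:C) else (0:C)))%C in
  Cmod err <= 1 /\ (err <> 0%C -> (e2 + M <= e1 \/ e1 + M <= e2)%nat).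
Proof.
  intros HM err. unfold err. destruct (Nat.eqb_spec e1 e2) as [<-|E].
  - rewrite root_avg_diag by auto.
    replace (RtoC 1 - RtoC 1)%C with (RtoC 0) by ring_C.
    rewrite Cmod_0. split; [lra | tauto].
  - replace (root_avg M e1 e2 - 0)%C with (root_avg M e1 e2) by ring_C.
    split; [now apply Cmod_root_avg_le|].
    intros H. destruct (Nat.lt_ge_cases e1 (e2 + M)), (Nat.lt_ge_cases e2 (e1 + M)); try lia.
    exfalso. apply H. now apply root_avg_off.
Qed.

End RootsOfUnity.

Section Averaging.

Variable a : nat -> nat -> C.

Lemma Cpw_scaled_root (r : R) (w : C) l n :
  Cpw (RtoC r * Cpw w l)%C n = (RtoC (r ^ n) * Cpw (Cpw w n) l)%C.
Proof. rewrite Cpw_mult, Cpw_RtoC, !Cpw_Cpw, Nat.mul_comm. reflexivity. Qed.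

Lemma Cpw_conj_scaled_root (r : R) (w : C) l m :
  Cpw (Cconj (RtoC r * Cpw w l))%C m = (RtoC (r ^ m) * Cpw (Cpw (Cconj w) m) l)%C.
Proof.
  rewrite Cmult_conj, <- Cpw_conj.
  replace (Cconj (RtoC r)) with (RtoC r) by (apply injective_projections; simpl; ring).
  apply Cpw_scaled_root.
Qed.

(* On the circle of radius [r] the defect series is a trigonometric series in
   the angle, with these coefficients. *)
Definition defect_coef r n m : C := (a n m * RtoC (r ^ n * (r ^ m - / r ^ m)))%C.

Lemma defect_term_scaled_root r M l n m : 0 < r ->
  (Cpw (RtoC r * Cpw (root1 M) l) n * Cpw (Cconj (RtoC r * Cpw (root1 M) l)) m
   - Cpw (RtoC r * Cpw (root1 M) l) n / Cpw (RtoC r * Cpw (root1 M) l) m)%C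
  = (RtoC (r ^ n * (r ^ m - / r ^ m)) * Cpw (Cpw (root1 M) n * Cpw (Cconj (root1 M)) m) l)%C.
Proof.
  intros Hr. rewrite !Cpw_scaled_root, Cpw_conj_scaled_root, Cpw_mult.
  assert (Hr' : r ^ m <> 0) by (apply pow_nonzero; lra).
  set (A := Cpw (Cpw (root1 M) m) l). set (A' := Cpw (Cpw (Cconj (root1 M)) m) l).
  assert (HAA : (A * A')%C = 1%C).
  { unfold A, A'. rewrite <- !Cpw_mult, root1_mult_conj, !Cpw_1. reflexivity. }
  assert (HA : A <> 0%C).
  { intro E. rewrite E, Cmult_0_l in HAA. apply (f_equal fst) in HAA. simpl in HAA. lra. }
  replace A' with (/ A)%C by (rewrite <- (Cmult_1_l (/ A)), <- HAA; field; auto).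
  rewrite RtoC_mult, RtoC_minus, RtoC_inv by auto. field.
  split; auto. intro E. apply RtoC_inj in E. auto.
Qed.

Lemma avg_defect_eq r M p q N : 0 < r ->
  (/ INR M * sumC (fun l => Cpw (Cpw (root1 M) q * Cpw (Cconj (root1 M)) p) l
                             * defect a (RtoC r * Cpw (root1 M) l) N) (M - 1))%C
  = dsumC (fun n m => defect_coef r n m * root_avg M (n + q) (m + p))%C N.
Proof.
  intros Hr. unfold defect.
  rewrite (sumC_ext _ (fun l => dsumC (fun n m => defect_coef r n m *
       Cpw (Cpw (root1 M) (n + q) * Cpw (Cconj (root1 M)) (m + p)) l) N)%C).
  2:{ intros l _. rewrite <- dsumC_mult_l. apply dsumC_ext. intros n m _ _.
      rewrite defect_term_scaled_root by auto. unfold defect_coef.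
      rewrite !Cpw_add, !(Cpw_mult _ _ l). ring_C. }
  unfold dsumC. rewrite sumC_switch, <- sumC_mult_l. apply sumC_ext; intros n _.
  rewrite sumC_switch, <- sumC_mult_l. apply sumC_ext; intros m _.
  unfold root_avg. rewrite <- sumC_mult_l, <- sumC_mult_l, <- sumC_mult_l.
  apply sumC_ext; intros l _. ring_C.
Qed.

Definition diag_ind p q n m : C := if Nat.eqb (n + q) (m + p) then (1:C) else (0:C).

Definition diag_series p q s N : C :=
  dsumC (fun n m => diag_ind p q n m * a n m * RtoC (s ^ m - 1))%C N.

Lemma diag_part_rescale p q r N : 0 < r ->
  (RtoC (r ^ q) * dsumC (fun n m => defect_coef r n m * diag_ind p q n m)%C N)%C
  = (RtoC (r ^ p) * diag_series p q (r * r) N)%C.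
Proof.
  intros Hr. unfold diag_series. rewrite <- !dsumC_mult_l. apply dsumC_ext. intros n m _ _.
  unfold defect_coef, diag_ind. destruct (Nat.eqb_spec (n + q) (m + p)) as [E|E]; [|ring_C].
  assert (E2 : r ^ q * r ^ n = r ^ p * r ^ m) by (rewrite <- !pow_add; f_equal; lia).
  assert (Hm : r ^ m <> 0) by (apply pow_nonzero; lra).
  assert (E3 : r ^ q * (r ^ n * (r ^ m - / r ^ m)) = r ^ p * ((r * r) ^ m - 1)).
  { rewrite Rpow_mult_distr.
    replace (r ^ q * (r ^ n * (r ^ m - / r ^ m))) with ((r ^ q * r ^ n) * (r ^ m - / r ^ m)) by ring.
    rewrite E2. field. auto. }
  transitivity (a n m * RtoC (r ^ q * (r ^ n * (r ^ m - / r ^ m))))%C.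
  - rewrite !RtoC_mult. ring_C.
  - rewrite E3, !RtoC_mult. ring_C.
Qed.

End Averaging.

Lemma pow_le_1 x n : 0 <= x <= 1 -> x ^ n <= 1.
Proof. intros H. rewrite <- (pow1 n). apply pow_incr. lra. Qed.

Lemma pow_le_pow_decr x m n : 0 <= x <= 1 -> (m <= n)%nat -> x ^ n <= x ^ m.
Proof.
  intros Hx Hmn. replace n with (m + (n - m))%nat by lia. rewrite pow_add.
  assert (0 <= x ^ m) by (apply pow_le; lra).
  assert (x ^ (n - m) <= 1) by (apply pow_le_1; lra). nra.
Qed.

Lemma Rabs_defect_scale_le r n m : 0 < r <= 1 ->
  Rabs (r ^ n * (r ^ m - / r ^ m)) <= (/ r) ^ n * (/ r) ^ m.
Proof.
  intros Hr. rewrite !pow_inv.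
  assert (0 < r ^ m) by (apply pow_lt; lra). assert (r ^ m <= 1) by (apply pow_le_1; lra).
  assert (0 < r ^ n) by (apply pow_lt; lra). assert (r ^ n <= 1) by (apply pow_le_1; lra).
  assert (1 <= / r ^ m) by (rewrite <- Rinv_1; apply Rinv_le_contravar; lra).
  assert (1 <= / r ^ n) by (rewrite <- Rinv_1; apply Rinv_le_contravar; lra).
  rewrite Rabs_mult, Rabs_pos_eq, Rabs_left1 by lra. nra.
Qed.

Section DiagonalSeries.

Variable a : nat -> nat -> C.

(* Off the diagonal the kernel only sees frequencies at least [M] apart, which
   are paid for by the convergence of the series at radius [R0 / r]. *)
Lemma Cmod_aliasing_le r R0 B M p q N : 0 < r <= 1 -> 1 <= R0 -> (0 < M)%nat ->
  (forall K, dpsum_abs a (RtoC (R0 * / r)) (RtoC (R0 * / r)) K <= B) ->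
  Cmod (dsumC (fun n m => defect_coef a r n m * (root_avg M (n + q) (m + p) - diag_ind p q n m))%C N)
  <= B / R0 ^ (M - (p + q)).
Proof.
  intros Hr HR HM HB.
  assert (Hri : 1 <= / r) by (rewrite <- Rinv_1; apply Rinv_le_contravar; lra).
  assert (HRp : 0 < / R0 ^ (M - (p + q))) by (apply Rinv_0_lt_compat, pow_lt; lra).
  eapply Rle_trans; [apply Cmod_dsumC_le|].
  apply Rle_trans with (dsumR (fun n m => / R0 ^ (M - (p + q))
                                * (Cmod (a n m) * ((R0 * / r) ^ n * (R0 * / r) ^ m))) N).
  - apply dsumR_le. intros n m _ _. unfold defect_coef, diag_ind.
    destruct (root_avg_sub_diag_ind M (n + q) (m + p) HM) as [Herr Hfar].
    rewrite !Cmod_mult, Cmod_R.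
    destruct (Ceq_dec (root_avg M (n + q) (m + p)
                        - (if Nat.eqb (n + q) (m + p) then (1:C) else (0:C)))%C 0) as [E|E].
    + rewrite E, Cmod_0, Rmult_0_r. apply Rmult_le_pos; [lra|].
      apply Rmult_le_pos; [apply Cmod_ge_0|]. apply Rmult_le_pos; apply pow_le; nra.
    + assert (Hfreq : (/ r) ^ n * (/ r) ^ m
                      <= (R0 * / r) ^ n * (R0 * / r) ^ m / R0 ^ (M - (p + q))).
      { apply pow_mul_pow_le_scaled; try lra. specialize (Hfar E). lia. }
      pose proof (Rabs_defect_scale_le r n m Hr).
      pose proof (Cmod_ge_0 (a n m)). pose proof (Rabs_pos (r ^ n * (r ^ m - / r ^ m))).
      unfold Rdiv in Hfreq.
      apply Rle_trans with (Cmod (a n m) * ((/ r) ^ n * (/ r) ^ m) * 1).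
      * apply Rmult_le_compat; try nra. apply Cmod_ge_0.
      * rewrite Rmult_1_r. nra.
  - rewrite dsumR_mult_l, <- dpsum_abs_RtoC by (apply Rmult_le_pos; lra).
    unfold Rdiv. rewrite Rmult_comm. apply Rmult_le_compat_r; [lra | apply HB].
Qed.

Lemma diag_series_radius_bound r R0 B M p q N eps : 0 < r <= 1 -> 1 <= R0 -> (0 < M)%nat ->
  (forall K, dpsum_abs a (RtoC (R0 * / r)) (RtoC (R0 * / r)) K <= B) ->
  (forall l, (l <= M - 1)%nat -> Cmod (defect a (RtoC r * Cpw (root1 M) l)%C N) <= eps) ->
  r ^ p * Cmod (diag_series a p q (r * r) N) <= r ^ q * (eps + B / R0 ^ (M - (p + q))).
Proof.
  intros Hr HR HM HB HD.
  assert (Havg : Cmod (dsumC (fun n m => defect_coef a r n m * root_avg M (n + q) (m + p))%C N)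
                 <= eps).
  { rewrite <- avg_defect_eq by lra. apply Cmod_avg_le; auto. intros l Hl.
    rewrite Cmod_mult, Cmod_Cpw, Cmod_mult, !Cmod_Cpw, Cmod_conj, Cmod_root1, !pow1,
      Rmult_1_l, pow1, Rmult_1_l.
    now apply HD. }
  pose proof (Cmod_aliasing_le r R0 B M p q N Hr HR HM HB) as Halias.
  assert (Hsplit : dsumC (fun n m => defect_coef a r n m * diag_ind p q n m)%C N
     = (dsumC (fun n m => defect_coef a r n m * root_avg M (n + q) (m + p))%C N
        - dsumC (fun n m => defect_coef a r n m
                             * (root_avg M (n + q) (m + p) - diag_ind p q n m))%C N)%C).
  { rewrite <- dsumC_minus. apply dsumC_ext. intros. ring_C. }
  assert (Hrp : 0 < r ^ p) by (apply pow_lt; lra).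
  assert (Hrq : 0 < r ^ q) by (apply pow_lt; lra).
  rewrite <- (Rabs_pos_eq (r ^ p)), <- Cmod_R, <- Cmod_mult, <- diag_part_rescale by lra.
  rewrite Cmod_mult, Cmod_R, Rabs_pos_eq by lra. apply Rmult_le_compat_l; [lra|].
  rewrite Hsplit. eapply Rle_trans; [apply Cmod_triangle|]. rewrite Cmod_opp. lra.
Qed.

Lemma diag_series_sub_bound p q s1 s2 B1 N :
  0 <= s2 <= s1 -> s1 <= 1 -> (p <= N)%nat -> (q <= N)%nat ->
  (forall n m, (1 <= m)%nat -> (m < q)%nat -> a n m = (0:C)) ->
  (forall K, dpsum_abs a (RtoC 1) (RtoC 1) K <= B1) ->
  Cmod (diag_series a p q s1 N - diag_series a p q s2 N - a p q * RtoC (s1 ^ q - s2 ^ q))%C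
  <= 2 * s1 ^ (S q) * B1.
Proof.
  intros Hs Hs1 Hp Hq Hcols HB.
  assert (Hs1q : 0 <= s1 ^ S q) by (apply pow_le; lra).
  rewrite <- (dsumC_indicator (a p q * RtoC (s1 ^ q - s2 ^ q))%C p q N) by auto.
  unfold diag_series. rewrite <- !dsumC_minus.
  eapply Rle_trans; [apply Cmod_dsumC_le|].
  apply Rle_trans with (dsumR (fun n m => 2 * s1 ^ (S q) * (Cmod (a n m) * (1 ^ n * 1 ^ m))) N).
  2:{ rewrite dsumR_mult_l. apply Rmult_le_compat_l; [lra|].
      specialize (HB N). unfold dpsum_abs in HB. rewrite Cmod_R, Rabs_R1 in HB. exact HB. }
  apply dsumR_le. intros n m _ _. rewrite !pow1, !Rmult_1_r.
  assert (Hpos : 0 <= 2 * s1 ^ S q * Cmod (a n m)) by (pose proof (Cmod_ge_0 (a n m)); nra).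
  unfold diag_ind. destruct (Nat.eqb_spec (n + q) (m + p)) as [Ed|Ed].
  - destruct (Nat.eq_dec m q) as [->|Hmq].
    + assert (n = p) as -> by lia. rewrite !Nat.eqb_refl. cbn [andb].
      replace (1 * a p q * RtoC (s1 ^ q - 1) - 1 * a p q * RtoC (s2 ^ q - 1)
               - a p q * RtoC (s1 ^ q - s2 ^ q))%C with (RtoC 0) by (rewrite !RtoC_minus; ring_C).
      rewrite Cmod_0. lra.
    + rewrite (proj2 (Nat.eqb_neq m q) Hmq), Bool.andb_false_r.
      replace (1 * a n m * RtoC (s1 ^ m - 1) - 1 * a n m * RtoC (s2 ^ m - 1) - 0)%C
        with (a n m * RtoC (s1 ^ m - s2 ^ m))%C by (rewrite !RtoC_minus; ring_C).
      destruct m as [|m].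
      * rewrite !pow_O, Rminus_diag, Cmult_0_r, Cmod_0. lra.
      * destruct (Nat.lt_ge_cases (S m) q).
        -- rewrite Hcols, Cmult_0_l, Cmod_0 by lia. lra.
        -- assert (s2 ^ S m <= s1 ^ S m) by (apply pow_incr; lra).
           assert (0 <= s2 ^ S m) by (apply pow_le; lra).
           assert (s1 ^ S m <= s1 ^ S q) by (apply pow_le_pow_decr; [lra|lia]).
           rewrite Cmod_mult, Cmod_R, Rabs_pos_eq by lra.
           pose proof (Cmod_ge_0 (a n (S m))). nra.
  - assert (Hind : andb (Nat.eqb n p) (Nat.eqb m q) = false).
    { destruct (Nat.eqb_spec n p), (Nat.eqb_spec m q); simpl; auto. lia. }
    rewrite Hind.
    replace (0 * a n m * RtoC (s1 ^ m - 1) - 0 * a n m * RtoC (s2 ^ m - 1) - 0)%C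
      with (RtoC 0) by ring_C.
    rewrite Cmod_0. lra.
Qed.

End DiagonalSeries.

(* Comparing the diagonal series at the radii [r] and [r/2] isolates the
   coefficient: [(r^2)^q - (r^2/4)^q >= 3/4 (r^2)^q] dominates the rest. *)
Lemma le_of_two_radii_bounds A g1 g2 r B1 eps p q :
  0 <= A -> 0 <= g1 -> 0 <= g2 -> 0 < r <= 1 -> 0 < eps -> 0 <= B1 -> (1 <= q)%nat ->
  r <= eps / (8 * B1 + 1) ->
  A * ((r * r) ^ q - (r / 2 * (r / 2)) ^ q) <= g1 + g2 + 2 * (r * r) ^ S q * B1 ->
  r ^ p * g1 <= r ^ q * (3 / 16 * eps * (r * r) ^ q * (r / 2) ^ p) ->
  (r / 2) ^ p * g2 <= (r / 2) ^ q * (3 / 16 * eps * (r * r) ^ q * (r / 2) ^ p) ->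
  A <= eps.
Proof.
  intros HA Hg1 Hg2 Hr He HB1 Hq Hre Hmain H1 H2.
  set (s := (r * r) ^ q) in *. assert (Hs : 0 < s) by (apply pow_lt; nra).
  set (t := (r / 2) ^ p) in *. assert (Ht : 0 < t) by (apply pow_lt; lra).
  assert (Htr : t <= r ^ p) by (apply pow_incr; lra).
  assert (Hrq : 0 <= r ^ q <= 1) by (split; [apply pow_le | apply pow_le_1]; lra).
  assert (Hrq2 : 0 <= (r / 2) ^ q <= 1) by (split; [apply pow_le | apply pow_le_1]; lra).
  set (tau := 3 / 16 * eps * s * t) in *.
  assert (Htau : 0 < tau) by (unfold tau; repeat apply Rmult_lt_0_compat; lra).
  assert (Hg1t : t * g1 <= tau) by nra.
  assert (Hg2t : t * g2 <= tau) by nra.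
  assert (Hsum : g1 + g2 <= 3 / 8 * eps * s).
  { apply Rmult_le_reg_l with t; auto. unfold tau in *. nra. }
  assert (Hs4 : (r / 2 * (r / 2)) ^ q <= s / 4).
  { replace (r / 2 * (r / 2)) with (r * r * / 4) by field. rewrite Rpow_mult_distr. fold s.
    assert ((/ 4) ^ q <= / 4).
    { replace q with (S (q - 1)) by lia. simpl.
      assert ((/ 4) ^ (q - 1) <= 1) by (apply pow_le_1; lra). nra. }
    nra. }
  assert (Hrest : 2 * (r * r) ^ S q * B1 <= eps / 4 * s).
  { change ((r * r) ^ S q) with (r * r * (r * r) ^ q). fold s.
    assert (r * B1 <= eps / 8).
    { apply Rle_trans with (eps / (8 * B1 + 1) * B1); [apply Rmult_le_compat_r; auto|].
      apply Rmult_le_reg_r with (8 * B1 + 1); [lra|].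
      replace (eps / (8 * B1 + 1) * B1 * (8 * B1 + 1)) with (eps * B1) by (field; lra). nra. }
    assert (r * B1 * (r * s) <= eps / 8 * (r * s)) by (apply Rmult_le_compat_r; nra).
    assert (eps / 8 * (r * s) <= eps / 8 * s) by (apply Rmult_le_compat_l; nra).
    nra. }
  nra.
Qed.

Lemma eventually_forall_le (P : nat -> nat -> Prop) L :
  (forall l, (l <= L)%nat -> exists N0, forall N, (N0 <= N)%nat -> P l N) ->
  exists N0, forall N, (N0 <= N)%nat -> forall l, (l <= L)%nat -> P l N.
Proof.
  induction L; intros H.
  - destruct (H 0%nat (le_n _)) as [N0 HN]. exists N0. intros N HN' l Hl.
    replace l with 0%nat by lia. auto.
  - destruct IHL as [N1 HN1]; [intros; apply H; lia|].
    destruct (H (S L) (le_n _)) as [N2 HN2]. exists (max N1 N2). intros N HN l Hl.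
    destruct (Nat.eq_dec l (S L)) as [->|]; [apply HN2 | apply HN1]; lia.
Qed.

Lemma Cmod_scaled_root r M l : 0 <= r -> Cmod (RtoC r * Cpw (root1 M) l)%C = r.
Proof. intros Hr. rewrite Cmod_mult, Cmod_Cpw, Cmod_root1, pow1, Cmod_R, Rabs_pos_eq; lra. Qed.

Section ColumnsVanish.

Variable a : nat -> nat -> C.
Hypothesis Hentire : forall z w : C, exists B : R, forall N : nat, dpsum_abs a z w N <= B.
Hypothesis Hdefect : forall z, 0 < Cmod z <= 1 ->
  forall eps, 0 < eps -> exists N0, forall N, (N0 <= N)%nat -> Cmod (defect a z N) <= eps.

Lemma dpsum_abs_bound_nonneg z w B : (forall N, dpsum_abs a z w N <= B) -> 0 <= B.
Proof. intros HB. eapply Rle_trans; [apply dpsum_abs_nonneg | apply (HB 0%nat)]. Qed.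

Lemma diag_series_eventually_small p q r tau : 0 < r <= 1 -> 0 < tau ->
  exists N0, forall N, (N0 <= N)%nat ->
    r ^ p * Cmod (diag_series a p q (r * r) N) <= r ^ q * tau.
Proof.
  intros Hr Htau.
  destruct (Hentire (RtoC (2 * / r)) (RtoC (2 * / r))) as [B HB].
  pose proof (dpsum_abs_bound_nonneg _ _ _ HB) as HB0.
  destruct (pow2_inv_eventually_le B (tau / 2) HB0 ltac:(lra)) as [K HK].
  set (M := (K + p + q + 1)%nat). assert (HM : (0 < M)%nat) by (unfold M; lia).
  assert (Halias : B / 2 ^ (M - (p + q)) <= tau / 2).
  { unfold Rdiv. rewrite <- pow_inv. apply HK. unfold M. lia. }
  destruct (eventually_forall_le
              (fun l N => Cmod (defect a (RtoC r * Cpw (root1 M) l)%C N) <= tau / 2) (M - 1))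
    as [N0 HN0].
  { intros l _. apply Hdefect; [rewrite Cmod_scaled_root|]; lra. }
  exists N0. intros N HN.
  eapply Rle_trans; [apply (diag_series_radius_bound a r 2 B M p q N (tau / 2)); auto; lra|].
  apply Rmult_le_compat_l; [apply pow_le; lra | lra].
Qed.

Lemma coef_eq_0_of_lower_cols p q : (1 <= q)%nat ->
  (forall n m, (1 <= m)%nat -> (m < q)%nat -> a n m = (0:C)) -> a p q = (0:C).
Proof.
  intros Hq Hcols.
  destruct (Hentire (RtoC 1) (RtoC 1)) as [B1 HB1].
  pose proof (dpsum_abs_bound_nonneg _ _ _ HB1) as HB10.
  assert (Hsmall : forall eps, 0 < eps -> Cmod (a p q) <= eps).
  { intros eps He.
    set (r := Rmin (/ 2) (eps / (8 * B1 + 1))).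
    assert (Hr : 0 < r <= / 2).
    { split; [apply Rmin_pos; [lra | apply Rdiv_lt_0_compat; lra] | apply Rmin_l]. }
    set (tau := 3 / 16 * eps * (r * r) ^ q * (r / 2) ^ p).
    assert (Htau : 0 < tau).
    { assert (0 < (r * r) ^ q) by (apply pow_lt; nra).
      assert (0 < (r / 2) ^ p) by (apply pow_lt; lra).
      unfold tau. repeat apply Rmult_lt_0_compat; lra. }
    destruct (diag_series_eventually_small p q r tau ltac:(lra) Htau) as [N1 H1].
    destruct (diag_series_eventually_small p q (r / 2) tau ltac:(lra) Htau) as [N2 H2].
    set (N := max (max N1 N2) (max p q)).
    set (X := diag_series a p q (r * r) N). set (Y := diag_series a p q (r / 2 * (r / 2)) N).
    assert (Hpq : (r / 2 * (r / 2)) ^ q <= (r * r) ^ q) by (apply pow_incr; nra).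
    assert (Hdiff := diag_series_sub_bound a p q (r * r) (r / 2 * (r / 2)) B1 N
                       ltac:(nra) ltac:(nra) ltac:(unfold N; lia) ltac:(unfold N; lia) Hcols HB1).
    fold X Y in Hdiff.
    apply (le_of_two_radii_bounds (Cmod (a p q)) (Cmod X) (Cmod Y) r B1 eps p q);
      try apply Cmod_ge_0; auto; try lra.
    - apply Rmin_r.
    - rewrite <- (Rabs_pos_eq ((r * r) ^ q - (r / 2 * (r / 2)) ^ q)), <- Cmod_R, <- Cmod_mult by lra.
      set (Z := (a p q * RtoC ((r * r) ^ q - (r / 2 * (r / 2)) ^ q))%C) in *.
      replace Z with (X - Y - (X - Y - Z))%C by ring_C.
      eapply Rle_trans; [apply Cmod_triangle|]. rewrite Cmod_opp.
      assert (Cmod (X - Y) <= Cmod X + Cmod Y) by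
        (eapply Rle_trans; [apply Cmod_triangle | rewrite Cmod_opp; lra]).
      lra.
    - apply H1. unfold N. lia.
    - apply H2. unfold N. lia. }
  apply Cmod_eq_0, Rle_antisym; [|apply Cmod_ge_0].
  destruct (Rle_lt_dec (Cmod (a p q)) 0); auto.
  specialize (Hsmall (Cmod (a p q) / 2) ltac:(lra)). lra.
Qed.

Lemma cols_eq_0 m : (1 <= m)%nat -> forall n, a n m = (0:C).
Proof.
  induction m as [m IH] using (well_founded_induction Wf_nat.lt_wf). intros Hm n.
  apply coef_eq_0_of_lower_cols; [exact Hm|]. intros n' m' H1 H2. apply IH; auto.
Qed.

End ColumnsVanish.

Lemma ex_series_of_bounded_sums (b : nat -> R) B : (forall n, 0 <= b n) ->
  (forall N, sumR b N <= B) -> ex_series b.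
Proof.
  intros Hb HB. destruct (growing_cv (sum_f_R0 b)) as [l Hl].
  - intros n. simpl. specialize (Hb (S n)). lra.
  - exists B. intros x [i ->]. rewrite <- sum_n_Reals. apply HB.
  - exists l. now apply is_series_Reals.
Qed.

Lemma INR_le_pow2 n : INR n <= 2 ^ n.
Proof.
  induction n; [simpl; lra|]. rewrite S_INR. simpl.
  assert (1 <= 2 ^ n) by (apply pow_R1_Rle; lra). lra.
Qed.

Lemma INR_sqr_le_pow4 n : INR n * INR n <= 4 ^ n.
Proof.
  pose proof (INR_le_pow2 n). pose proof (pos_INR n).
  replace (4 ^ n) with (2 ^ n * 2 ^ n) by (rewrite <- Rpow_mult_distr; f_equal; ring). nra.
Qed.

Definition pow_remainder (z h : C) n : C :=
  (Cpw (z + h) n - Cpw z n - RtoC (INR n) * h * Cpw z (pred n))%C.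

Lemma pow_remainder_S z h n : pow_remainder z h (S n)
  = ((z + h) * pow_remainder z h n + RtoC (INR n) * h * h * Cpw z (pred n))%C.
Proof.
  unfold pow_remainder. destruct n; simpl pred; rewrite !Cpw_S, ?Cpw_O.
  - change (INR 1) with 1. change (INR 0) with 0. ring_C.
  - rewrite !S_INR, !RtoC_plus. ring_C.
Qed.

Lemma Cmod_pow_remainder_le z h n : Cmod h <= 1 ->
  Cmod (pow_remainder z h n) <= Cmod h ^ 2 * (INR n * INR n) * (Cmod z + 1) ^ n.
Proof.
  intros Hh. set (rho := Cmod z + 1).
  assert (Hz : 0 <= Cmod z) by apply Cmod_ge_0. assert (Hh0 : 0 <= Cmod h) by apply Cmod_ge_0.
  induction n.
  - unfold pow_remainder. simpl pred. rewrite !Cpw_O. change (INR 0) with 0.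
    replace (1 - 1 - RtoC 0 * h * 1)%C with (RtoC 0) by ring_C. rewrite Cmod_0. simpl. lra.
  - rewrite pow_remainder_S. eapply Rle_trans; [apply Cmod_triangle|].
    rewrite !Cmod_mult, Cmod_R, Rabs_pos_eq, Cmod_Cpw by apply pos_INR.
    assert (Hzh : Cmod (z + h) <= rho) by (unfold rho; eapply Rle_trans; [apply Cmod_triangle | lra]).
    assert (Hzn : Cmod z ^ pred n <= rho ^ n).
    { apply Rle_trans with (rho ^ pred n); [apply pow_incr; unfold rho; lra|].
      apply Rle_pow; unfold rho; [lra | lia]. }
    assert (0 <= rho ^ n) by (apply pow_le; unfold rho; lra).
    assert (0 <= INR n) by apply pos_INR.
    assert (0 <= Cmod (pow_remainder z h n)) by apply Cmod_ge_0.
    assert (0 <= Cmod z ^ pred n) by (apply pow_le; lra).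
    rewrite S_INR. change (rho ^ S n) with (rho * rho ^ n).
    set (X := Cmod (pow_remainder z h n)) in *. set (hh := Cmod h) in *.
    assert (A1 : Cmod (z + h) * X <= rho * (hh ^ 2 * (INR n * INR n) * rho ^ n))
      by (apply Rmult_le_compat; auto; apply Cmod_ge_0).
    assert (A2 : INR n * hh * hh * Cmod z ^ pred n <= hh ^ 2 * INR n * rho ^ n).
    { replace (hh ^ 2 * INR n * rho ^ n) with ((INR n * hh * hh) * rho ^ n) by ring.
      apply Rmult_le_compat_l; auto. apply Rmult_le_pos; nra. }
    assert (A3 : hh ^ 2 * INR n * rho ^ n <= hh ^ 2 * (2 * INR n + 1) * (rho * rho ^ n)).
    { assert (0 <= hh ^ 2) by (apply pow_le; lra).
      assert (rho ^ n <= rho * rho ^ n) by (assert (1 <= rho) by (unfold rho; lra); nra).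
      apply Rmult_le_compat; nra. }
    assert (0 <= hh ^ 2) by (apply pow_le; lra).
    nra.
Qed.

Lemma is_derive_of_quadratic_remainder (f : C -> C) (z l : C) K : 0 <= K ->
  (forall y, Cmod (y - z) <= 1 -> Cmod (f y - f z - (y - z) * l) <= K * Cmod (y - z) ^ 2) ->
  @is_derive C_AbsRing C_NormedModule f z l.
Proof.
  intros HK Hf. split; [apply is_linear_scal_l|].
  intros x Hx.
  pose proof (@is_filter_lim_locally_unique C_AbsRing (AbsRing_NormedModule C_AbsRing) z x Hx).
  subst x. intros eps.
  assert (Hd : 0 < Rmin 1 (eps / (K + 1))).
  { apply Rmin_pos; [lra | apply Rdiv_lt_0_compat; [apply cond_pos | lra]]. }
  exists (mkposreal _ Hd). intros y Hy. change (Cmod (y - z) < Rmin 1 (eps / (K + 1))) in Hy.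
  change (norm (minus y z)) with (Cmod (y - z)).
  change (norm (minus (minus (f y) (f z)) (scal (minus y z) l)))
    with (Cmod (f y - f z - (y - z) * l)%C).
  pose proof (Rmin_l 1 (eps / (K + 1))). pose proof (Rmin_r 1 (eps / (K + 1))).
  pose proof (cond_pos eps). pose proof (Cmod_ge_0 (y - z)).
  eapply Rle_trans; [apply Hf; lra|].
  assert (K * Cmod (y - z) <= eps).
  { apply Rle_trans with (K * (eps / (K + 1))); [apply Rmult_le_compat_l; lra|].
    apply Rmult_le_reg_r with (K + 1); [lra|].
    replace (K * (eps / (K + 1)) * (K + 1)) with (K * eps) by (field; lra). nra. }
  simpl. nra.
Qed.

Section PowerSeries.

Variables (c : nat -> C) (f : C -> C).
Hypothesis Habs : forall rho, 0 <= rho ->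
  exists B, forall N, sumR (fun n => Cmod (c n) * rho ^ n) N <= B.
Hypothesis Hcvg : forall z, filterlim (sumC (fun n => c n * Cpw z n)%C) eventually (locally (f z)).

Definition derived_coef z n : C := (c n * RtoC (INR n) * Cpw z (pred n))%C.

Lemma Cmod_derived_coef_le z n : Cmod (derived_coef z n) <= Cmod (c n) * (4 * (Cmod z + 1)) ^ n.
Proof.
  unfold derived_coef. rewrite !Cmod_mult, Cmod_R, Rabs_pos_eq, Cmod_Cpw, Rmult_assoc by apply pos_INR.
  apply Rmult_le_compat_l; [apply Cmod_ge_0|].
  pose proof (Cmod_ge_0 z).
  assert (INR n <= 4 ^ n) by (eapply Rle_trans; [apply INR_le_pow2 | apply pow_incr; lra]).
  assert (Cmod z ^ pred n <= (Cmod z + 1) ^ n).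
  { apply Rle_trans with ((Cmod z + 1) ^ pred n); [apply pow_incr; lra|].
    apply Rle_pow; [lra | lia]. }
  rewrite Rpow_mult_distr. apply Rmult_le_compat; auto; [apply pos_INR | apply pow_le; lra].
Qed.

Lemma Cmod_sumC_pow_remainder_le z h B N : Cmod h <= 1 ->
  (forall N, sumR (fun n => Cmod (c n) * (4 * (Cmod z + 1)) ^ n) N <= B) ->
  Cmod (sumC (fun n => c n * pow_remainder z h n)%C N) <= B * Cmod h ^ 2.
Proof.
  intros Hy HB. set (rho := Cmod z + 1).
  eapply Rle_trans; [apply Cmod_sumC_le|].
  rewrite Rmult_comm.
  eapply Rle_trans; [|apply Rmult_le_compat_l; [apply pow_le, Cmod_ge_0 | apply HB]].
  rewrite <- sumR_mult_l. apply sumR_le. intros n _. rewrite Cmod_mult.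
  pose proof (Cmod_pow_remainder_le z h n Hy) as HE. fold rho in HE.
  assert (INR n * INR n * rho ^ n <= (4 * rho) ^ n).
  { rewrite Rpow_mult_distr. apply Rmult_le_compat_r;
      [apply pow_le; unfold rho; pose proof (Cmod_ge_0 z); lra | apply INR_sqr_le_pow4]. }
  assert (0 <= Cmod h ^ 2) by (apply pow_le, Cmod_ge_0).
  pose proof (Cmod_ge_0 (c n)). fold rho.
  apply Rle_trans with (Cmod (c n) * (Cmod h ^ 2 * (4 * rho) ^ n)); [|right; ring].
  apply Rmult_le_compat_l; [lra|]. eapply Rle_trans; [apply HE|].
  rewrite Rmult_assoc. apply Rmult_le_compat_l; lra.
Qed.

Lemma powser_increment_le z l B :
  (forall N, sumR (fun n => Cmod (c n) * (4 * (Cmod z + 1)) ^ n) N <= B) ->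
  is_series (derived_coef z) l ->
  forall y, Cmod (y - z) <= 1 -> Cmod (f y - f z - (y - z) * l)%C <= B * Cmod (y - z) ^ 2.
Proof.
  intros HB Hl y Hy. set (h := (y - z)%C) in *.
  apply le_epsilon. intros eps He.
  destruct (filterlim_C_eventually _ _ (Hcvg y) (eps / 3) ltac:(lra)) as [N1 HN1].
  destruct (filterlim_C_eventually _ _ (Hcvg z) (eps / 3) ltac:(lra)) as [N2 HN2].
  destruct (filterlim_C_eventually _ _ Hl (eps / 3) ltac:(lra)) as [N3 HN3].
  set (N := max (max N1 N2) N3).
  specialize (HN1 N ltac:(unfold N; lia)). specialize (HN2 N ltac:(unfold N; lia)).
  specialize (HN3 N ltac:(unfold N; lia)).
  set (Sy := sumC (fun n => c n * Cpw y n)%C N) in *.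
  set (Sz := sumC (fun n => c n * Cpw z n)%C N) in *.
  set (Sd := sum_n (derived_coef z) N) in *.
  set (U := sumC (fun n => c n * pow_remainder z h n)%C N).
  assert (HU : (Sy - Sz - h * Sd)%C = U).
  { unfold Sy, Sz, Sd, U. change (sum_n (derived_coef z) N) with (sumC (derived_coef z) N).
    rewrite <- sumC_minus, <- sumC_mult_l, <- sumC_minus. apply sumC_ext. intros n _.
    unfold derived_coef, pow_remainder. replace (z + h)%C with y by (unfold h; ring_C). ring_C. }
  assert (HUle : Cmod U <= B * Cmod h ^ 2) by now apply Cmod_sumC_pow_remainder_le.
  assert (Htail : Cmod (h * (Sd - l))%C <= eps / 3).
  { rewrite Cmod_mult. pose proof (Cmod_ge_0 (Sd - l)). pose proof (Cmod_ge_0 h).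
    change (Cmod (Sd - l) < eps / 3) in HN3. nra. }
  assert (HN1' : Cmod (f y - Sy) < eps / 3).
  { rewrite <- Cmod_opp. replace (- (f y - Sy))%C with (Sy - f y)%C by ring_C. exact HN1. }
  replace (f y - f z - h * l)%C with (U + (f y - Sy) + (Sz - f z) + h * (Sd - l))%C
    by (rewrite <- HU; ring_C).
  pose proof (Cmod_triangle (U + (f y - Sy) + (Sz - f z)) (h * (Sd - l))).
  pose proof (Cmod_triangle (U + (f y - Sy)) (Sz - f z)).
  pose proof (Cmod_triangle U (f y - Sy)).
  lra.
Qed.

Lemma powser_ex_derive z : @ex_derive C_AbsRing C_NormedModule f z.
Proof.
  set (rho := Cmod z + 1). pose proof (Cmod_ge_0 z).
  destruct (Habs (4 * rho) ltac:(unfold rho; lra)) as [B HB].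
  assert (HB0 : 0 <= B).
  { eapply Rle_trans; [|apply (HB 0%nat)]. rewrite sumR_O. simpl. rewrite Rmult_1_r. apply Cmod_ge_0. }
  assert (Hser : ex_series (derived_coef z)).
  { apply (@ex_series_le C_AbsRing C_CompleteNormedModule _ (fun n => Cmod (c n) * (4 * rho) ^ n)).
    - intros n. apply Cmod_derived_coef_le.
    - apply ex_series_of_bounded_sums with B; auto.
      intros n. apply Rmult_le_pos; [apply Cmod_ge_0 | apply pow_le; unfold rho; lra]. }
  destruct Hser as [l Hl]. exists l.
  apply (is_derive_of_quadratic_remainder f z l B HB0).
  intros y Hy. eapply Rle_trans; [apply (powser_increment_le z l B HB Hl y Hy) | lra].
Qed.

End PowerSeries.

Lemma dpsum_of_cols_eq_0 (a : nat -> nat -> C) z w N :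
  (forall n m, (1 <= m)%nat -> a n m = (0:C)) ->
  dpsum a z w N = sumC (fun n => a n 0%nat * Cpw z n)%C N.
Proof.
  intros Ha. apply sumC_ext. intros n _.
  induction N.
  - rewrite sumC_O, Cpw_O. ring_C.
  - rewrite sumC_S, IHN, (Ha n (S N)) by lia. ring_C.
Qed.

Lemma first_col_abs_bounded (a : nat -> nat -> C) rho :
  (forall z w : C, exists B : R, forall N : nat, dpsum_abs a z w N <= B) -> 0 <= rho ->
  exists B, forall N, sumR (fun n => Cmod (a n 0%nat) * rho ^ n) N <= B.
Proof.
  intros Hentire Hr. destruct (Hentire (RtoC rho) (RtoC rho)) as [B HB]. exists B. intros N.
  eapply Rle_trans; [|apply (HB N)]. rewrite dpsum_abs_RtoC by auto. apply sumR_le. intros n _.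
  eapply Rle_trans; [|apply (sumR_term_le (fun m => Cmod (a n m) * (rho ^ n * rho ^ m)) N 0); [|lia]].
  - simpl. lra.
  - intros m. pose proof (Cmod_ge_0 (a n m)). apply Rmult_le_pos; auto.
    apply Rmult_le_pos; apply pow_le; auto.
Qed.

Theorem theorem5 (a : nat -> nat -> C) (phi : C -> C)
  (Hentire : forall z w : C, exists B : R, forall N : nat, dpsum_abs a z w N <= B)
  (Hphi : forall zeta : C,
      filterlim (dpsum a zeta (Cconj zeta)) eventually (locally (phi zeta)))
  (Hhull : forall zeta : C, Cmod zeta <= 1 ->
      in_proj_hull (fun p : C * C => exists t : C, Cmod t = 1 /\ p = (t, phi t))
                   (zeta, phi zeta)) :
  holomorphic_on (fun zeta : C => Cmod zeta < 1) phi.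
Proof.
  pose proof (cols_eq_0 a Hentire (defect_eventually_small a phi Hentire Hphi Hhull)) as Hcols.
  intros z _. apply (powser_ex_derive (fun n => a n 0%nat) phi).
  - intros rho Hrho. now apply first_col_abs_bounded.
  - intros w. eapply filterlim_ext; [|apply (Hphi w)].
    intros N. apply dpsum_of_cols_eq_0. intros n m Hm. now apply Hcols.
Qed.
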